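(* Let $\mathfrak g$ be an admissible non-reductive Lie algebra with $\mathfrak z(\mathfrak g)\subseteq[\mathfrak g,\mathfrak g]$, and let $\mathfrak r$ be the radical of $\mathfrak g$. If $h\in\mathfrak g$ is an Euler element of $\mathfrak g$, then $[h,\mathfrak r]=\{0\}$.
   Context: A finite-dimensional real Lie algebra $\mathfrak g$ is admissible if it contains a pointed (no affine lines), generating (spanning), closed convex subset invariant under $\operatorname{Inn}(\mathfrak g)=\langle e^{\operatorname{ad}\mathfrak g}\rangle$. An Euler element of $\mathfrak g$ is an element $h$ such that $\operatorname{ad}h$ is diagonalizable with spectrum contained in $\{-1,0,1\}$. *)

From HB Require Import structures.
From mathcomp Require Import all_boot all_order all_algebra.
From mathcomp Require Import all_classical all_reals all_analysis.
Set Implicit Arguments. Unset Strict Implicit. Unset Printing Implicit Defensive.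
Import Order.TTheory GRing.Theory Num.Theory.
Import numFieldNormedType.Exports.
Local Open Scope classical_set_scope.
Local Open Scope ring_scope.

(* A finite-dimensional real Lie algebra is modelled (up to isomorphism) as
   R^n = 'rV[R]_n equipped with a bracket [br]. *)
Section LieDefs.
Variables (R : realType) (n : nat).
Notation V := 'rV[R]_n.

Definition is_lie_bracket (br : V -> V -> V) : Prop :=
  [/\ (forall x, linear (br x)),
      (forall y, linear (br^~ y)),
      (forall x, br x x = 0) &
      (forall x y z, br x (br y z) + br y (br z x) + br z (br x y) = 0)].

Definition lspan (S : set V) : set V :=
  [set v | exists (s : seq (R * V)),
      (forall p, p \in s -> S p.2) /\ v = \sum_(p <- s) p.1 *: p.2].

(* the matrix of ad x (acting on row vectors: v *m ad_mx x = br x v) *)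
Definition ad_mx (br : V -> V -> V) (x : V) : 'M[R]_n := lin1_mx (br x).

Definition expmx (A : 'M[R]_n) : 'M[R]_n :=
  \matrix_(i, j) lim ((fun N : nat => \sum_(k < N) (A ^+ k) i j / (k`!)%:R) @ \oo).

Definition convex_set (C : set V) : Prop :=
  forall x y (t : R), C x -> C y -> 0 <= t -> t <= 1 -> C (t *: x + (1 - t) *: y).

Definition pointed_set (C : set V) : Prop :=
  ~ exists c v : V, v != 0 /\ forall t : R, C (c + t *: v).

Definition generating_set (C : set V) : Prop := lspan C = setT.

(* invariant under Inn(g) = <e^{ad g}>; invariance under the generators
   e^{ad x} (x in g) is equivalent, since (e^{ad x})^{-1} = e^{ad (-x)}. *)
Definition Inn_invariant (br : V -> V -> V) (C : set V) : Prop :=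
  forall x v, C v -> C (v *m expmx (ad_mx br x)).

Definition admissible (br : V -> V -> V) : Prop :=
  exists C : set V, [/\ closed C, convex_set C, pointed_set C,
                        generating_set C & Inn_invariant br C].

Definition euler_element (br : V -> V -> V) (h : V) : Prop :=
  diagonalizable (ad_mx br h) /\
  forall a : R, eigenvalue (ad_mx br h) a -> a \in [:: -1; 0; 1].

Definition is_subspace (S : set V) : Prop :=
  S 0 /\ forall (a : R) x y, S x -> S y -> S (a *: x + y).

Definition is_ideal (br : V -> V -> V) (I : set V) : Prop :=
  is_subspace I /\ forall x y, I y -> I (br x y).

Fixpoint derived (br : V -> V -> V) (I : set V) (k : nat) : set V :=
  if k is k'.+1 then
    lspan [set br x y | x in derived br I k' & y in derived br I k']
  else I.

Definition solvable_set (br : V -> V -> V) (I : set V) : Prop :=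
  exists k, derived br I k `<=` [set 0].

Definition is_radical (br : V -> V -> V) (r : set V) : Prop :=
  [/\ is_ideal br r, solvable_set br r &
      forall I, is_ideal br I -> solvable_set br I -> I `<=` r].

Definition lie_center (br : V -> V -> V) : set V :=
  [set z | forall y, br z y = 0].

Definition derived_algebra (br : V -> V -> V) : set V :=
  lspan [set br x y | x in setT & y in setT].

Definition reductive (br : V -> V -> V) : Prop :=
  forall r, is_radical br r -> r = lie_center br.

End LieDefs.

From HB Require Import structures.
From mathcomp Require Import all_boot all_order all_algebra.
From mathcomp Require Import all_classical all_reals all_analysis.
From mathcomp Require Import lra.
Import Order.TTheory GRing.Theory Num.Theory.
Import numFieldNormedType.Exports.
Local Open Scope classical_set_scope.
Local Open Scope ring_scope.
Set Implicit Arguments. Unset Strict Implicit.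

(* Let [y] be an eigenvector of [ad h] in the radical [r], with eigenvalue [e = ±1],
   lying in the [k]-th derived ideal [D^k r].  For an eigenvector [u] of [ad h]
   with eigenvalue [l ∈ {-1,0,1}], [(ad y)^2 u] lies in [D^(k+1) r] and has
   eigenvalue [2e + l]; this is either outside [{-1,0,1}], so [(ad y)^2 u = 0], or
   equal to [e].  By downward induction on [k] (the derived series of [r] ends in
   [0]) the latter vectors vanish too, so [(ad y)^2 = 0].  Then [e^(t ad y) = 1 + t ad y]
   and, the invariant cone being pointed, [ad y] kills the cone, which spans [g]:
   [y] is central, whence [e y = [h, y] = 0] and [y = 0].  Finally for [x] in [r],
   [[h,[h,x]] ± [h,x]] are [±1]-eigenvectors in [r], hence zero, so [[h,x] = 0]. *)

Lemma expmx_sq0 (R : realType) (n : nat) (A : 'M[R]_n) :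
  A *m A = 0 -> expmx A = 1%:M + A.
Proof.
move=> AA; apply/matrixP => i j; rewrite /expmx mxE.
apply: cvg_lim; first exact: Rhausdorff.
apply: cvg_near_cst; near=> N.
have le2N : (2 <= N)%N by near: N; exists 2%N.
have Ak0 k : (2 <= k)%N -> A ^+ k = 0.
  elim: k => // k IH; rewrite leq_eqVlt => /orP[/eqP <-|lt2k].
    by rewrite expr2 -mulmxE AA.
  by rewrite exprS IH ?mulr0.
rewrite -(subnKC le2N) big_split_ord /= [X in _ + X]big1 ?addr0; last first.
  by move=> k _; rewrite Ak0 ?leq_addr // mxE mul0r.
rewrite !big_ord_recr big_ord0 /= expr0 expr1.
by rewrite add0r !divr1 !mxE.
Unshelve. all: by end_near.
Qed.

Section Subspaces.
Variables (R : realType) (n : nat).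
Local Notation V := 'rV[R]_n.

Section Closure.
Variable S : set V.
Hypothesis subS : is_subspace S.

Lemma subspace0 : S 0. Proof. by case: subS. Qed.

Lemma subspaceD x y : S x -> S y -> S (x + y).
Proof. by move=> Sx Sy; have := subS.2 1 x y Sx Sy; rewrite scale1r. Qed.

Lemma subspaceZ a x : S x -> S (a *: x).
Proof. by move=> Sx; have := subS.2 a x 0 Sx subspace0; rewrite addr0. Qed.

Lemma subspaceB x y : S x -> S y -> S (x - y).
Proof. by move=> Sx Sy; rewrite -scaleN1r; apply/subspaceD/subspaceZ. Qed.

Lemma subspace_sum (I : eqType) (s : seq I) (F : I -> V) :
  (forall i, i \in s -> S (F i)) -> S (\sum_(i <- s) F i).
Proof.
elim: s => [|a s IH] SF; first by rewrite big_nil; apply: subspace0.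
rewrite big_cons; apply: subspaceD; first by apply: SF; rewrite mem_head.
by apply: IH => i si; apply: SF; rewrite inE si orbT.
Qed.

End Closure.

Lemma subspace_zero : is_subspace [set 0 : V].
Proof. by split => // a x y -> ->; rewrite scaler0 addr0. Qed.

Lemma subspace_preim (f : {linear V -> V}) (S : set V) :
  is_subspace S -> is_subspace (f @^-1` S).
Proof.
move=> subS; split; first by rewrite /= linear0; apply: subspace0.
by move=> a x y Sfx Sfy; rewrite /= linearP; apply: subS.2.
Qed.

Lemma lspan_sub (S : set V) : S `<=` lspan S.
Proof.
move=> v Sv; exists [:: (1, v)]; rewrite big_seq1 scale1r; split => //.
by move=> p; rewrite inE => /eqP ->.
Qed.

Lemma lspan_subspace (S : set V) : is_subspace (lspan S).
Proof.
split; first by exists [::]; rewrite big_nil.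
move=> a x y [sx [Ssx ->]] [sy [Ssy ->]].
exists ([seq (a * p.1, p.2) | p <- sx] ++ sy); split.
  by move=> p; rewrite mem_cat => /orP[/mapP[q /Ssx Sq ->]|/Ssy].
rewrite big_cat big_map scaler_sumr; congr (_ + _).
by apply: eq_bigr => p _; rewrite scalerA.
Qed.

Lemma lspan_min (S T : set V) : is_subspace T -> S `<=` T -> lspan S `<=` T.
Proof.
move=> subT ST v [s [Ss ->]].
by apply: subspace_sum => // p /Ss/ST; apply: subspaceZ.
Qed.

End Subspaces.

Section LieAlgebra.
Variables (R : realType) (n : nat) (br : 'rV[R]_n -> 'rV[R]_n -> 'rV[R]_n).
Hypothesis lie_br : is_lie_bracket br.
Local Notation V := 'rV[R]_n.

Lemma br_linear x : linear (br x). Proof. by case: lie_br. Qed.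
Lemma br_linear_l y : linear (br^~ y). Proof. by case: lie_br. Qed.

Definition ad (x : V) : {linear V -> V} :=
  HB.pack (br x) (GRing.isLinear.Build R V V *:%R (br x) (br_linear x)).
Definition adl (y : V) : {linear V -> V} :=
  HB.pack (br^~ y) (GRing.isLinear.Build R V V *:%R (br^~ y) (br_linear_l y)).

Lemma brDr x u v : br x (u + v) = br x u + br x v. Proof. exact: (linearD (ad x)). Qed.
Lemma brBr x u v : br x (u - v) = br x u - br x v. Proof. exact: (linearB (ad x)). Qed.
Lemma brNr x u : br x (- u) = - br x u. Proof. exact: (linearN (ad x)). Qed.
Lemma brZr x a u : br x (a *: u) = a *: br x u. Proof. exact: (linearZ_LR (ad x)). Qed.
Lemma br_sumr x (I : Type) (s : seq I) (F : I -> V) :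
  br x (\sum_(i <- s) F i) = \sum_(i <- s) br x (F i).
Proof. exact: (linear_sum (ad x)). Qed.
Lemma brDl y u v : br (u + v) y = br u y + br v y. Proof. exact: (linearD (adl y)). Qed.
Lemma brZl y a u : br (a *: u) y = a *: br u y. Proof. exact: (linearZ_LR (adl y)). Qed.

Lemma br_anticomm x y : br x y = - br y x.
Proof.
have [_ _ brxx _] := lie_br.
apply/eqP; rewrite -addr_eq0; apply/eqP.
by have := brxx (x + y); rewrite brDl !brDr !brxx add0r addr0.
Qed.

Lemma br_derivation x a b : br x (br a b) = br (br x a) b + br a (br x b).
Proof.
have [_ _ _ jacobi] := lie_br; have := jacobi x a b.
rewrite (br_anticomm b x) brNr (br_anticomm (br x a) b) => /eqP.
by rewrite -addrA addr_eq0 => /eqP ->; rewrite opprD !opprK addrC.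
Qed.

Lemma br_eigvecD x y u e l : br x y = e *: y -> br x u = l *: u ->
  br x (br y u) = (e + l) *: br y u.
Proof. by move=> xy xu; rewrite br_derivation xy xu brZl brZr scalerDl. Qed.

Lemma ad_mxE x v : v *m ad_mx br x = br x v.
Proof. exact: (mul_rV_lin1 (ad x)). Qed.

Lemma commutator_ideal I : is_ideal br I ->
  is_ideal br (lspan [set br a b | a in I & b in I]).
Proof.
move=> [subI idI]; split; first exact: lspan_subspace.
move=> x; apply: (lspan_min (T := ad x @^-1` lspan _)).
  exact/subspace_preim/lspan_subspace.
move=> _ [a Ia [b Ib <-]]; rewrite /= br_derivation.
apply: subspaceD; first exact: lspan_subspace.
  by apply: lspan_sub; exists (br x a); [exact: idI | exists b].
by apply: lspan_sub; exists a => //; exists (br x b) => //; exact: idI.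
Qed.

Lemma derived_ideal I : is_ideal br I -> forall k, is_ideal br (derived br I k).
Proof. by move=> idI; elim=> // k; apply: commutator_ideal. Qed.

Lemma admissible_ad_sq0_central y : admissible br ->
  (forall v, br y (br y v) = 0) -> forall u, br y u = 0.
Proof.
move=> [C [_ _ pointedC spanC invC]] yy0.
have yC0 v : C v -> br y v = 0.
  move=> Cv; have [//|yv0] := eqVneq (br y v) 0; exfalso; apply: pointedC.
  exists v, (br y v); split => // t.
  have sq0 : ad_mx br (t *: y) *m ad_mx br (t *: y) = 0.
    apply/row_matrixP => i; rewrite row0 rowE mulmxA !ad_mxE !brZl brZr yy0.
    by rewrite !scaler0.
  by have := invC (t *: y) v Cv; rewrite expmx_sq0 // mulmxDr mulmx1 ad_mxE brZl.
move=> u; have : lspan C u by rewrite spanC.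
move=> [s [Cs ->]]; rewrite br_sumr big1_seq // => p /andP[_ /Cs Cp].
by rewrite /= brZr yC0 ?scaler0.
Qed.

Section EulerElement.
Variable h : V.
Hypothesis euler_h : euler_element br h.

Lemma euler_ad3 v : br h (br h (br h v)) = br h v.
Proof.
have [diag_h eig_h] := euler_h; rewrite -!ad_mxE; set A := ad_mx br h.
have [rs _ rsP] := proj1 (@diagonalizablePeigen R n A) diag_h.
have : (v <= \sum_(a <- rs) eigenspace A a)%MS by rewrite (rsP.2 _ v).2 submx1.
rewrite (big_nth 0) big_mkord => /sub_sumsmxP[u_ ->].
rewrite !mulmx_suml; apply: eq_bigr => i _; set w := u_ i *m _.
have Aw : w *m A = rs`_i *: w by apply/eigenspaceP; rewrite submxMl.
have [->|w0] := eqVneq w 0; first by rewrite !mul0mx.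
have : eigenvalue A rs`_i by apply/eigenvalueP; exists w.
have -> : w *m A *m A *m A = (rs`_i * (rs`_i * rs`_i)) *: w.
  by rewrite Aw -!scalemxAl Aw -!scalemxAl Aw !scalerA mulrA.
by rewrite Aw => /eig_h; rewrite !inE => /or3P[] /eqP ->; congr (_ *: _); lra.
Qed.

Lemma euler_eigvec_eq0 w m : br h w = m *: w -> m * m * m != m -> w = 0.
Proof.
move=> hw m3m; have := euler_ad3 w; rewrite hw !brZr hw brZr hw !scalerA.
by move/eqP; rewrite -subr_eq0 -scalerBl scaler_eq0 subr_eq0 (negbTE m3m) => /eqP.
Qed.

Lemma euler_eigvec_pm v (a := br h (br h v)) (b := br h v) :
  br h (a + b) = a + b /\ br h (a - b) = - (a - b).
Proof. by rewrite brDr brBr euler_ad3 opprB addrC. Qed.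

Lemma euler_eigvec_span (S : set V) : is_subspace S ->
  (forall u l, l \in [:: -1; 0; 1] -> br h u = l *: u -> S u) -> forall v, S v.
Proof.
move=> subS Seig v; set a := br h (br h v); set b := br h v.
have [hp hm] := euler_eigvec_pm v.
have Sp : S (a + b) by apply: (Seig _ 1); rewrite ?scale1r ?inE ?eqxx ?orbT.
have Sm : S (a - b) by apply: (Seig _ (-1)); rewrite ?scaleN1r ?inE ?eqxx.
have S0 : S (v - a).
  by apply: (Seig _ 0); rewrite ?inE ?eqxx ?orbT // scale0r brBr euler_ad3 subrr.
have Sa : S a.
  have -> : a = 2^-1 *: ((a + b) + (a - b)).
    rewrite addrACA subrr addr0 -mulr2n -[a *+ 2]scaler_nat scalerA.
    by rewrite mulVf ?scale1r ?pnatr_eq0.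
  by apply: (subspaceZ subS); apply: subspaceD.
by rewrite -(subrK a v); apply: (subspaceD subS).
Qed.

Section Radical.
Variable r : set V.
Hypotheses (adm : admissible br) (ideal_r : is_ideal br r).

Lemma derived_pm_eigvec_eq0_step k e y : e = 1 \/ e = -1 ->
  (forall z, derived br r k.+1 z -> br h z = e *: z -> z = 0) ->
  derived br r k y -> br h y = e *: y -> y = 0.
Proof.
move=> e_pm IH Dy hy.
have [subDk idDk] := derived_ideal ideal_r k.
have yy0 : forall v, br y (br y v) = 0.
  apply: (euler_eigvec_span (S := ad y @^-1` (ad y @^-1` [set 0]))).
    by do 2 apply: subspace_preim; exact: subspace_zero.
  move=> u l l3 hu; change (br y (br y u) = 0).
  have hyyu := br_eigvecD hy (br_eigvecD hy hu).
  have [l_e|l_ne] := eqVneq l (- e).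
    apply: IH; last by rewrite hyyu l_e; congr (_ *: _); lra.
    apply: lspan_sub; exists y => //; exists (br y u) => //.
    by rewrite br_anticomm -scaleN1r; apply: (subspaceZ subDk); exact: idDk.
  apply: euler_eigvec_eq0 hyyu _; apply/eqP; move: l3 l_ne; rewrite !inE.
  by case: e_pm => -> /or3P[] /eqP ->; rewrite ?opprK ?eqxx // => _; lra.
have e_neq0 : e != 0 by case: e_pm => ->; rewrite ?oppr_eq0 oner_eq0.
move: hy; rewrite br_anticomm (admissible_ad_sq0_central adm yy0) oppr0.
by move/esym/eqP; rewrite scaler_eq0 (negbTE e_neq0) => /eqP.
Qed.

Lemma derived_pm_eigvec_eq0 K : derived br r K `<=` [set 0] ->
  forall k e y, (k <= K)%N -> e = 1 \/ e = -1 ->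
  derived br r k y -> br h y = e *: y -> y = 0.
Proof.
move=> DK0 k e y /subnK; move: (K - k)%N => j.
elim: j k y => [|j IH] k y jkK e_pm Dy hy.
  by apply: DK0; rewrite -jkK add0n.
apply: (derived_pm_eigvec_eq0_step e_pm _ Dy hy) => z Dz hz.
by apply: (IH k.+1 z) => //; rewrite addnS -addSn.
Qed.

End Radical.
End EulerElement.
End LieAlgebra.

Theorem proposition4p12 (R : realType) (n : nat) (br : 'rV[R]_n -> 'rV[R]_n -> 'rV[R]_n)
  (Hbr : is_lie_bracket br)
  (Hadm : admissible br)
  (Hnred : ~ reductive br)
  (Hz : lie_center br `<=` derived_algebra br)
  (r : set 'rV[R]_n) (Hr : is_radical br r)
  (h : 'rV[R]_n) (Hh : euler_element br h) :
  forall x, r x -> br h x = 0.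
Proof.
move=> x rx; have [[subr idr] [K DK0] _] := Hr.
set b := br h x; set a := br h b.
have ra : r a by apply/idr/idr.
have rb : r b by apply: idr.
have [hp hm] := euler_eigvec_pm Hbr Hh x.
have eig0 := derived_pm_eigvec_eq0 Hbr Hh Hadm (conj subr idr) DK0 (leq0n K).
have p0 : a + b = 0 by apply: (eig0 1); [left | exact: subspaceD | rewrite scale1r].
have m0 : a - b = 0 by apply: (eig0 (-1)); [right | exact: subspaceB | rewrite scaleN1r].
have bb : (a + b) - (a - b) = b + b by rewrite opprB addrC addrA subrK.
have : 2%:R *: b = 0 by rewrite scaler_nat mulr2n -bb p0 m0 subrr.
by move/eqP; rewrite scaler_eq0 pnatr_eq0 => /eqP.
Qed.
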